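(* Let $A\subseteq B$ be commutative semirings, $S=A[x_1,\dots,x_n]$, $\rho$ a congruence on $B$, and $T\subseteq S\times S$ non-empty. Then there is a bijection between $Z_\rho(T)(B)/\rho$ and $\mathrm{Hom}_{A\text{-alg}}(S/T^{c},B/\rho)$; in particular $\#\,Z_\rho(T)(B)/\rho=\#\,\mathrm{Hom}_{A\text{-alg}}(S/T^{c},B/\rho)$. In particular, if $\rho=\mathrm{id}_B$, then $\#\,Z_{\mathrm{id}_B}(T)(B)=\#\,\mathrm{Hom}_{A\text{-alg}}(S/T^{c},B)$.
   Context: Semirings are commutative with $0$ and $1\neq0$, $0a=0$; congruences are equivalence relations compatible with $+$ and $\cdot$; $\mathrm{id}_B=\{(b,b)\}$. $T^{c}$ is the congruence on $S$ generated by $T$. $Z_\rho(T)(B)=\{P\in B^n:(f(P),g(P))\in\rho\ \forall(f,g)\in T\}$. For $Y\subseteq B^n$, $Y/\rho=\{(\bar c_1,\dots,\bar c_n):(c_1,\dots,c_n)\in Y\}\subseteq(B/\rho)^n$ where $\bar c$ is the class of $c$ modulo $\rho$. An $A$-semialgebra is a commutative semiring $C$ which is an $A$-semimodule with $a(bc)=(ab)c=b(ac)$; $S/T^{c}$ and $B/\rho$ are $A$-semialgebras via $A\hookrightarrow S\to S/T^{c}$ and $A\hookrightarrow B\to B/\rho$. $\mathrm{Hom}_{A\text{-alg}}(C,D)$ is the set of maps that are semiring homomorphisms (preserving $0,1,+,\cdot$) and $A$-semimodule homomorphisms. *)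

From HB Require Import structures.
From mathcomp Require Import all_boot all_algebra.
From Stdlib Require Import ClassicalEpsilon.
Set Implicit Arguments. Unset Strict Implicit. Unset Printing Implicit Defensive.
Import GRing.Theory.
Local Open Scope ring_scope.

(* S = A[x_0, ..., x_(n-1)], built as iterated univariate polynomials:
   spoly A 0 = A, spoly A (k+1) = (spoly A k)[x_k]. *)
Fixpoint spoly (R : comNzSemiRingType) (n : nat) : comNzSemiRingType :=
  match n with 0 => R | k.+1 => {poly (spoly R k)} : comNzSemiRingType end.

Fixpoint polyn_cst (R : comNzSemiRingType) (n : nat) : R -> spoly R n :=
  match n return R -> spoly R n with
  | 0 => fun a => a
  | k.+1 => fun a => (@polyn_cst R k a)%:P
  end.

Fixpoint polyn_evaln (R B : comNzSemiRingType) (f : R -> B) (Q : nat -> B)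
    (n : nat) : spoly R n -> B :=
  match n return spoly R n -> B with
  | 0 => f
  | k.+1 => fun p : {poly (spoly R k)} =>
      \sum_(i < size p) @polyn_evaln R B f Q k p`_i * Q k ^+ i
  end.

Definition polyn_eval (R B : comNzSemiRingType) (f : R -> B) (n : nat)
    (P : 'I_n -> B) (p : spoly R n) : B :=
  polyn_evaln f (fun j => if insub j is Some i then P i else 0) p.

Definition congruence (X : comNzSemiRingType) (r : X -> X -> Prop) : Prop :=
  [/\ (forall x, r x x),
      (forall x y, r x y -> r y x),
      (forall x y z, r x y -> r y z -> r x z),
      (forall a b c d, r a b -> r c d -> r (a + c) (b + d)) &
      (forall a b c d, r a b -> r c d -> r (a * c) (b * d))].

Definition gen_cong (X : comNzSemiRingType) (T : X * X -> Prop) : X -> X -> Prop :=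
  fun x y => forall r, congruence r -> (forall t, T t -> r t.1 t.2) -> r x y.

Definition quot (X : Type) (r : X -> X -> Prop) : Type :=
  {C : X -> Prop | exists x, C = r x}.

Definition qclass (X : Type) (r : X -> X -> Prop) (x : X) : quot r :=
  exist _ (r x) (ex_intro _ x erefl).

Definition qrepr (X : Type) (r : X -> X -> Prop) (q : quot r) : X :=
  proj1_sig (constructive_indefinite_description _ (proj2_sig q)).

(* induced operations on X / r (well defined when r is a congruence) *)
Definition qzero (X : comNzSemiRingType) (r : X -> X -> Prop) : quot r := qclass r 0.
Definition qone (X : comNzSemiRingType) (r : X -> X -> Prop) : quot r := qclass r 1.
Definition qadd (X : comNzSemiRingType) (r : X -> X -> Prop) (u v : quot r) : quot r :=
  qclass r (qrepr u + qrepr v).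
Definition qmul (X : comNzSemiRingType) (r : X -> X -> Prop) (u v : quot r) : quot r :=
  qclass r (qrepr u * qrepr v).
Definition qscale (A X : comNzSemiRingType) (h : A -> X) (r : X -> X -> Prop)
    (a : A) (u : quot r) : quot r :=
  qclass r (h a * qrepr u).

Definition is_Aalg_hom (A : Type) (C D : Type)
    (zC oC : C) (addC mulC : C -> C -> C) (scC : A -> C -> C)
    (zD oD : D) (addD mulD : D -> D -> D) (scD : A -> D -> D)
    (phi : C -> D) : Prop :=
  [/\ phi zC = zD, phi oC = oD,
      (forall u v, phi (addC u v) = addD (phi u) (phi v)),
      (forall u v, phi (mulC u v) = mulD (phi u) (phi v)) &
      (forall a u, phi (scC a u) = scD a (phi u))].

Section Objects.
Variables (A B : comNzSemiRingType) (iota : A -> B) (n : nat).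
Variables (rho : B -> B -> Prop) (T : spoly A n * spoly A n -> Prop).

Definition Zrho (P : 'I_n -> B) : Prop :=
  forall fg, T fg -> rho (polyn_eval iota P fg.1) (polyn_eval iota P fg.2).

(* Z_rho(T)(B) / rho, a subset of (B/rho)^n *)
Definition Zrho_quot : Type :=
  {v : 'I_n -> quot rho | exists P, Zrho P /\ v = (fun i => qclass rho (P i))}.

Definition SmodT := quot (gen_cong T).

Definition Hom_quot : Type :=
  {phi : SmodT -> quot rho |
     is_Aalg_hom
       (qzero (gen_cong T)) (qone (gen_cong T)) (@qadd _ (gen_cong T))
       (@qmul _ (gen_cong T)) (@qscale A _ (@polyn_cst A n) (gen_cong T))
       (qzero rho) (qone rho) (@qadd _ rho) (@qmul _ rho) (@qscale A _ iota rho)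
       phi}.

Definition Hom_B : Type :=
  {phi : SmodT -> B |
     is_Aalg_hom
       (qzero (gen_cong T)) (qone (gen_cong T)) (@qadd _ (gen_cong T))
       (@qmul _ (gen_cong T)) (@qscale A _ (@polyn_cst A n) (gen_cong T))
       0 1 +%R *%R (fun a b => iota a * b)
       phi}.
End Objects.

From HB Require Import structures.
From mathcomp Require Import all_boot all_algebra.
From Stdlib Require Import ClassicalEpsilon ProofIrrelevance.
From Stdlib Require Import FunctionalExtensionality PropExtensionality.
Set Implicit Arguments. Unset Strict Implicit. Unset Printing Implicit Defensive.
Import GRing.Theory.
Local Open Scope ring_scope.

(* A point P of Z_rho(T)(B) gives the evaluation map S -> B, p |-> p(P), an
   A-algebra morphism whose composite with B -> B/rho kills T, hence T^c, and so
   factors through S/T^c. Conversely a morphism S/T^c -> B/rho is determined by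
   the images of the classes of the variables, since two morphisms out of a
   polynomial semiring that agree on the variables agree everywhere (induction
   on the number of variables, and on p = q * X + c within each). This argument
   only uses the operations of the target, never a semiring structure on B/rho,
   so it is run once for any target D with a surjective morphism B -> D of
   kernel rho: D = B/rho gives the first bijection, D = B with rho = id_B the
   second. *)

(* [polyn_var A k i] is the variable x_i, and 0 when k <= i. *)
Fixpoint polyn_var (A : comNzSemiRingType) (k i : nat) : spoly A k :=
  match k return spoly A k with
  | 0 => 0
  | k'.+1 => if i == k' then 'X else (polyn_var A k' i)%:P
  end.

Section AalgHom.
Variables (A C D E : Type).
Variables (zC oC : C) (addC mulC : C -> C -> C) (scC : A -> C -> C).
Variables (zD oD : D) (addD mulD : D -> D -> D) (scD : A -> D -> D).
Variables (zE oE : E) (addE mulE : E -> E -> E) (scE : A -> E -> E).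

Lemma is_Aalg_hom_comp (f : C -> D) (g : D -> E) :
  is_Aalg_hom zC oC addC mulC scC zD oD addD mulD scD f ->
  is_Aalg_hom zD oD addD mulD scD zE oE addE mulE scE g ->
  is_Aalg_hom zC oC addC mulC scC zE oE addE mulE scE (g \o f).
Proof.
case=> f0 f1 fD fM fZ [g0 g1 gD gM gZ].
by split=> [||u v|u v|a u] /=; rewrite ?f0 ?f1 ?fD ?fM ?fZ.
Qed.
End AalgHom.

Section SemiringCongruence.
Variables (X : comNzSemiRingType) (r : X -> X -> Prop) (r_cong : congruence r).

Lemma cong_refl x : r x x. Proof. by case: r_cong. Qed.
Lemma cong_sym x y : r x y -> r y x. Proof. by case: r_cong => _ h *; apply: h. Qed.
Lemma cong_trans x y z : r x y -> r y z -> r x z.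
Proof. by case: r_cong => _ _ h *; apply: h; eassumption. Qed.
Lemma cong_add a b c d : r a b -> r c d -> r (a + c) (b + d).
Proof. by case: r_cong => _ _ _ h _; apply: h. Qed.
Lemma cong_mul a b c d : r a b -> r c d -> r (a * c) (b * d).
Proof. by case: r_cong => _ _ _ _ h; apply: h. Qed.

Lemma qclass_eq x y : r x y -> qclass r x = qclass r y.
Proof.
move=> rxy; apply: subset_eq_compat; apply: functional_extensionality => z.
apply: propositional_extensionality; split; apply: cong_trans => //.
exact: cong_sym.
Qed.

Lemma qreprK : cancel (@qrepr X r) (qclass r).
Proof.
case=> C hC; rewrite /qrepr /=.
case: (constructive_indefinite_description _ hC) => x /= eCx.
by apply: subset_eq_compat; rewrite eCx.
Qed.

Lemma qclass_eqE x y : qclass r x = qclass r y <-> r x y.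
Proof.
split; last exact: qclass_eq.
by move/(congr1 (@proj1_sig _ _)) => /= ->; apply: cong_refl.
Qed.

Lemma qrepr_rel x : r (qrepr (qclass r x)) x.
Proof. by apply/qclass_eqE; rewrite qreprK. Qed.

Variable (A : comNzSemiRingType) (h : A -> X).

Lemma qclass_hom :
  is_Aalg_hom 0 1 +%R *%R (fun a x => h a * x)
    (qzero r) (qone r) (@qadd _ r) (@qmul _ r) (qscale h (r:=r)) (qclass r).
Proof.
have rK x := cong_sym (qrepr_rel x).
split=> // [x y|x y|a x]; apply: qclass_eq.
- exact: cong_add.
- exact: cong_mul.
- exact/cong_mul/rK/cong_refl.
Qed.

Lemma qrepr_lift_hom (D : Type) zD oD addD mulD scD (f : X -> D) :
  is_Aalg_hom 0 1 +%R *%R (fun a x => h a * x) zD oD addD mulD scD f ->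
  (forall x y, r x y -> f x = f y) ->
  is_Aalg_hom (qzero r) (qone r) (@qadd _ r) (@qmul _ r) (qscale h (r:=r))
    zD oD addD mulD scD (f \o qrepr (r:=r)).
Proof.
case=> f0 f1 fD fM fZ f_r; have fK x : f (qrepr (qclass r x)) = f x.
  exact/f_r/qrepr_rel.
by split=> [||u v|u v|a u] /=; rewrite /qzero /qone /qadd /qmul /qscale fK.
Qed.
End SemiringCongruence.

Section Evaluation.
Variables (A B : comNzSemiRingType) (iota : {rmorphism A -> B}) (Q : nat -> B).
Local Notation ev k := (@polyn_evaln A B iota Q k).

Lemma polyn_evaln_rmorphism k : exists g : {rmorphism spoly A k -> B}, g =1 ev k.
Proof.
elim: k => [|k [g gE]]; first by exists iota.
have cgQ : commr_rmorph g (Q k) by move=> x; apply: mulrC.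
exists (horner_morph cgQ) => p /=.
rewrite /horner_morph (@horner_coef_wide _ (size p)) ?size_poly //.
by apply: eq_bigr => i _; rewrite coef_map /= gE.
Qed.

Lemma polyn_evalnS_wide k (p : {poly spoly A k}) m : (size p <= m)%N ->
  ev k.+1 p = \sum_(i < m) ev k p`_i * Q k ^+ i.
Proof.
have [g gE] := polyn_evaln_rmorphism k.
move=> le_p_m /=; rewrite (big_ord_widen m (fun i => ev k p`_i * Q k ^+ i)) //.
rewrite big_mkcond; apply: eq_bigr => i _; case: ltnP => // le_p_i.
by rewrite nth_default // -gE rmorph0 mul0r.
Qed.

Lemma polyn_evalnC k c : ev k.+1 c%:P = ev k c.
Proof.
by rewrite (@polyn_evalnS_wide _ _ 1) ?size_polyC ?leq_b1 // big_ord1 coefC mulr1.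
Qed.

Lemma polyn_evalnX k : ev k.+1 'X = Q k.
Proof.
have [g gE] := polyn_evaln_rmorphism k.
rewrite (@polyn_evalnS_wide _ _ 2) ?size_polyX // big_ord_recr big_ord1 /= !coefX /=.
by rewrite -!gE rmorph0 rmorph1 mul0r add0r mul1r.
Qed.

Lemma polyn_evaln_cst k a : ev k (polyn_cst k a) = iota a.
Proof. by elim: k => // k IHk; rewrite [polyn_cst _ _]/= polyn_evalnC. Qed.

Lemma polyn_evaln_var k i : (i < k)%N -> ev k (polyn_var A k i) = Q i.
Proof.
elim: k => // k IHk; rewrite ltnS leq_eqVlt [polyn_var _ _ _]/=.
case: eqP => [-> _|_ lt_ik]; first exact: polyn_evalnX.
exact: etrans (polyn_evalnC _) (IHk lt_ik).
Qed.

Lemma polyn_evaln_hom k :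
  is_Aalg_hom 0 1 +%R *%R (fun a p => polyn_cst k a * p)
    0 1 +%R *%R (fun a x => iota a * x) (ev k).
Proof.
have [g gE] := polyn_evaln_rmorphism k.
split=> [||p q|p q|a p]; rewrite -?gE ?rmorph0 ?rmorph1 ?rmorphD ?rmorphM //.
by rewrite gE polyn_evaln_cst.
Qed.
End Evaluation.

Lemma polyC_Aalg_hom (A : comNzSemiRingType) k :
  is_Aalg_hom 0 1 +%R *%R (fun a p => polyn_cst k a * p)
    0 1 +%R *%R (fun a p => polyn_cst k.+1 a * p)
    (@polyC (spoly A k) : spoly A k -> spoly A k.+1).
Proof. by split=> [||p q|p q|a p]; rewrite /= ?polyCD ?polyCM. Qed.

Section PolynomialHomUniqueness.
Variables (A : comNzSemiRingType) (D : Type).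
Variables (zD oD : D) (addD mulD : D -> D -> D) (scD : A -> D -> D).

Lemma Aalg_hom_spoly_eq k (f g : spoly A k -> D) :
  is_Aalg_hom 0 1 +%R *%R (fun a p => polyn_cst k a * p) zD oD addD mulD scD f ->
  is_Aalg_hom 0 1 +%R *%R (fun a p => polyn_cst k a * p) zD oD addD mulD scD g ->
  (forall i : 'I_k, f (polyn_var A k i) = g (polyn_var A k i)) -> f =1 g.
Proof.
elim: k f g => [|k IHk] f g f_hom g_hom fg_var.
  case: f_hom g_hom => _ f1 _ _ fZ [_ g1 _ _ gZ] a.
  by have := fZ a 1; have := gZ a 1; rewrite /= mulr1 f1 g1 => -> ->.
have fgC c : f c%:P = g c%:P.
  apply: (IHk (f \o polyC) (g \o polyC));
    try exact: is_Aalg_hom_comp (polyC_Aalg_hom _ _) _.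
  move=> i; have := fg_var (widen_ord (leqnSn k) i).
  by rewrite [polyn_var _ _ _]/= ltn_eqF.
have fgX : f 'X = g 'X by have := fg_var ord_max; rewrite [polyn_var _ _ _]/= eqxx.
case: f_hom g_hom => f0 _ fD fM _ [g0 _ gD gM _].
by elim/poly_ind => [|p c fgp]; rewrite ?f0 ?g0 // fD gD fM gM fgp fgX fgC.
Qed.
End PolynomialHomUniqueness.

Lemma polyn_eval_var (A B : comNzSemiRingType) (iota : {rmorphism A -> B}) n
    (P : 'I_n -> B) (i : 'I_n) :
  polyn_eval iota P (polyn_var A n i) = P i.
Proof. by rewrite /polyn_eval polyn_evaln_var // valK. Qed.

Lemma Aalg_hom_kernel_congruence (A : Type) (X : comNzSemiRingType) (D : Type)
    (scX : A -> X -> X) zD oD addD mulD (scD : A -> D -> D) (f : X -> D) :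
  is_Aalg_hom 0 1 +%R *%R scX zD oD addD mulD scD f ->
  congruence (fun x y => f x = f y).
Proof.
case=> _ _ fD fM _; split=> // [x y z -> -> // | a b c d | a b c d].
  by rewrite !fD => -> ->.
by rewrite !fM => -> ->.
Qed.

Lemma gen_cong_congruence (X : comNzSemiRingType) (T : X * X -> Prop) :
  congruence (gen_cong T).
Proof.
split=> [x r r_cong _|x y cxy r r_cong rT|x y z cxy cyz r r_cong rT|
         a b c d cab ccd r r_cong rT|a b c d cab ccd r r_cong rT].
- exact: cong_refl r_cong x.
- exact: cong_sym r_cong _ _ (cxy r r_cong rT).
- exact: cong_trans r_cong _ _ _ (cxy r r_cong rT) (cyz r r_cong rT).
- exact: cong_add r_cong _ _ _ _ (cab r r_cong rT) (ccd r r_cong rT).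
- exact: cong_mul r_cong _ _ _ _ (cab r r_cong rT) (ccd r r_cong rT).
Qed.

Lemma sig_val_inj (Y : Type) (Q : Y -> Prop) (u v : {y | Q y}) :
  sval u = sval v -> u = v.
Proof. by apply: eq_sig_hprop => y p q; apply: proof_irrelevance. Qed.

Lemma sig_exists_eq_bij (Y : Type) (Q : Y -> Prop) :
  exists f : {y | Q y} -> {y | exists z, Q z /\ y = z}, bijective f.
Proof.
have g_spec (u : {y | exists z, Q z /\ y = z}) : Q (sval u).
  by case: u => y /= [z [Qz ->]].
exists (fun u => exist _ (sval u) (ex_intro _ _ (conj (svalP u) erefl))).
by exists (fun u => exist _ _ (g_spec u)) => u; apply: sig_val_inj.
Qed.

(* [pi] plays the role of B -> B/rho, with [s] a section of it. *)
Section Points.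
Variables (A B : comNzSemiRingType) (iota : {rmorphism A -> B}) (n : nat).
Variable (T : spoly A n * spoly A n -> Prop).
Variables (D : Type) (zD oD : D) (addD mulD : D -> D -> D) (scD : A -> D -> D).
Variables (pi : B -> D) (s : D -> B) (rho : B -> B -> Prop).
Hypothesis pi_hom :
  is_Aalg_hom 0 1 +%R *%R (fun a x => iota a * x) zD oD addD mulD scD pi.
Hypothesis piK : cancel s pi.
Hypothesis pi_eq : forall x y, pi x = pi y <-> rho x y.

Local Notation cT := (gen_cong T).
Local Notation cT_cong := (gen_cong_congruence T).
Local Notation Hom := {phi : SmodT T -> D |
  is_Aalg_hom (qzero cT) (qone cT) (@qadd _ cT) (@qmul _ cT)
    (qscale (@polyn_cst A n) (r:=cT)) zD oD addD mulD scD phi}.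
Local Notation Zpoint v := (exists P, Zrho iota rho T P /\ v = fun i => pi (P i)).

Definition eval_lift (v : 'I_n -> D) (p : spoly A n) : D :=
  pi (polyn_eval iota (s \o v) p).

Lemma eval_lift_hom v :
  is_Aalg_hom 0 1 +%R *%R (fun a p => polyn_cst n a * p)
    zD oD addD mulD scD (eval_lift v).
Proof. exact: is_Aalg_hom_comp (polyn_evaln_hom _ _ _) pi_hom. Qed.

Lemma eval_lift_var v (i : 'I_n) : eval_lift v (polyn_var A n i) = v i.
Proof. by rewrite /eval_lift polyn_eval_var /= piK. Qed.

Lemma pi_polyn_eval P p :
  pi (polyn_eval iota P p) = eval_lift (fun i => pi (P i)) p.
Proof.
apply: (Aalg_hom_spoly_eq (is_Aalg_hom_comp (polyn_evaln_hom _ _ _) pi_hom)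
          (eval_lift_hom _)) => i.
by rewrite eval_lift_var -(polyn_eval_var iota P i).
Qed.

Lemma eval_lift_gen_cong v : Zpoint v ->
  forall p q, cT p q -> eval_lift v p = eval_lift v q.
Proof.
case=> P [ZP ->]; set f := eval_lift _.
move=> p q /(_ (fun x y => f x = f y)); apply.
  exact: Aalg_hom_kernel_congruence (eval_lift_hom _).
by move=> fg Tfg; rewrite /f -!pi_polyn_eval; apply/pi_eq/ZP.
Qed.

Definition hom_point (phi : Hom) (i : 'I_n) : D :=
  sval phi (qclass cT (polyn_var A n i)).

Lemma hom_qclassE (phi : Hom) p :
  sval phi (qclass cT p) = eval_lift (hom_point phi) p.
Proof.
apply: (Aalg_hom_spoly_eq (is_Aalg_hom_comp (qclass_hom cT_cong _) (svalP phi))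
          (eval_lift_hom _)) => i.
by rewrite eval_lift_var.
Qed.

Lemma hom_point_Zpoint (phi : Hom) : Zpoint (hom_point phi).
Proof.
exists (s \o hom_point phi); split; last first.
  by apply: functional_extensionality => i; rewrite /= piK.
move=> fg Tfg; apply/pi_eq.
change (eval_lift (hom_point phi) fg.1 = eval_lift (hom_point phi) fg.2).
rewrite -!hom_qclassE; congr (sval phi _).
by apply: (qclass_eq cT_cong) => r _; apply.
Qed.

Definition hom_of_point (v : {v : 'I_n -> D | Zpoint v}) : Hom :=
  exist _ _ (qrepr_lift_hom cT_cong (eval_lift_hom (sval v))
              (eval_lift_gen_cong (svalP v))).

Definition point_of_hom (phi : Hom) : {v : 'I_n -> D | Zpoint v} :=
  exist _ _ (hom_point_Zpoint phi).

Lemma hom_of_point_bij : bijective hom_of_point.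
Proof.
exists point_of_hom => [v|phi]; apply: sig_val_inj; apply: functional_extensionality.
  move=> i; rewrite /= /hom_point /=.
  by rewrite (eval_lift_gen_cong (svalP v) (qrepr_rel cT_cong _)) eval_lift_var.
by move=> u; rewrite /= -hom_qclassE qreprK.
Qed.
End Points.

Theorem theorem3p12 (A B : comNzSemiRingType) (iota : {rmorphism A -> B})
  (iota_inj : injective iota) (n : nat)
  (rho : B -> B -> Prop) (rho_cong : congruence rho)
  (T : spoly A n * spoly A n -> Prop) (T_ne : exists t, T t) :
  (exists F : Zrho_quot iota rho T -> Hom_quot iota rho T, bijective F) /\
  (exists G : {P : 'I_n -> B | Zrho iota (@eq B) T P} -> Hom_B iota T,
     bijective G).
Proof.
split; first by eexists; apply: (hom_of_point_bij T (qclass_hom rho_cong iota)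
  (@qreprK _ rho) (qclass_eqE rho_cong)).
have [f f_bij] := sig_exists_eq_bij (Zrho iota (@eq B) T).
have id_hom : is_Aalg_hom 0 1 +%R *%R (fun a x => iota a * x)
                0 1 +%R *%R (fun a x => iota a * x) (@id B) by [].
by eexists; apply: bij_comp f_bij; apply: (hom_of_point_bij T id_hom (s := id)
  (fun _ => erefl) (fun x y => iff_refl (x = y))).
Qed.
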